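(* Let $q$ be a prime power, $m$ a positive integer with $m\ne 2$, $n=q^{2m}-1$, and $\delta$ an integer with $2\le\delta\le n$. The primitive, narrow-sense BCH code $\mathcal{BCH}(n,q^2;\delta)$ over $\mathbf{F}_{q^2}$ contains its Hermitian dual code if and only if $$\delta\le\delta_{\max}=q^{m+[m\text{ even}]}-1-(q^2-2)[m\text{ even}].$$
   Context: For a prime power $Q$ and integer $M\ge1$, let $\alpha$ be a primitive element of $\mathbf{F}_{Q^M}$, $n=Q^M-1$, and $C_x=\{xQ^k\bmod n\mid k\in\mathbf{Z}\}$ the $Q$-ary cyclotomic coset of $x$ modulo $n$. For $2\le\delta\le n$, $\mathcal{BCH}(n,Q;\delta)$ is the cyclic code of length $n$ over $\mathbf{F}_Q$ with generator polynomial $\prod_{z\in Z}(x-\alpha^z)$, $Z=C_1\cup\cdots\cup C_{\delta-1}$. Here $Q=q^2$, $M=m$. The Hermitian dual of $C\subseteq\mathbf{F}_{q^2}^n$ is $C^{\perp_h}=\{y\mid y^q\cdot x=0\ \forall x\in C\}$ with $y^q=(y_1^q,\dots,y_n^q)$. Iverson notation: $[P]=1$ if $P$ holds and $0$ otherwise. *)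

From HB Require Import structures.
From mathcomp Require Import all_boot all_order all_algebra all_field.
From mathcomp Require Import boolp.
Set Implicit Arguments. Unset Strict Implicit. Unset Printing Implicit Defensive.
Import GRing.Theory.
Local Open Scope ring_scope.

(* q-ary cyclotomic coset membership: z \in C_x (mod n), with Q the field size.
   k ranges over nat; since Q^M = 1 mod n this is the same as k ranging over Z. *)
Definition in_cyc_coset (n Q x z : nat) : Prop :=
  exists k : nat, z = ((x * Q ^ k) %% n)%N.

Definition in_bch_defset (n Q delta z : nat) : Prop :=
  exists2 x : nat, (1 <= x <= delta.-1)%N & in_cyc_coset n Q x z.

Definition bch_genpoly (L : fieldType) (n Q delta : nat) (alpha : L) : {poly L} :=
  \prod_(z < n | `[< in_bch_defset n Q delta z >]) ('X - (alpha ^+ z)%:P).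

(* The cyclic code of length n over K generated by the generator polynomial g:
   codewords c correspond to polynomials c(x) = sum c_i x^i of degree < n
   that are multiples of g (g | x^n - 1, so this is the ideal generated by g). *)
Definition bch_code (K L : fieldType) (iota : {rmorphism K -> L})
    (n Q delta : nat) (alpha : L) (c : 'rV[K]_n) : Prop :=
  bch_genpoly n Q delta alpha %| \sum_(i < n) (iota (c ord0 i))%:P * 'X^i.

Definition herm_dual (K : fieldType) (n q : nat) (C : 'rV[K]_n -> Prop)
    (y : 'rV[K]_n) : Prop :=
  forall x : 'rV[K]_n, C x -> \sum_(i < n) (y ord0 i) ^+ q * x ord0 i = 0.

Definition prime_power (q : nat) : Prop :=
  exists p k : nat, [/\ prime p, (0 < k)%N & q = (p ^ k)%N].

Definition delta_max (q m : nat) : nat :=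
  (q ^ (m + ~~ odd m) - 1 - (q ^ 2 - 2) * ~~ odd m)%N.

Arguments bch_code {K L} iota n Q delta alpha c.
Arguments herm_dual {K} n q C y.
Arguments bch_genpoly {L} n Q delta alpha.

(* A classical criterion (Aly, Klappenecker and Sarvepalli) reduces the inclusion
   C^{perp_h} <= C to arithmetic: it fails exactly when the defining set Z meets -qZ,
   i.e. when n | y + x q^t for some 0 < x, y < delta and some odd t.  Both directions
   go through trace words c_i = Tr(b alpha^(s i)), which have coordinates in F_{q^2}:
   if Z and -qZ are disjoint, the trace words for s = q z lie in C, and pairing
   y in C^{perp_h} with them gives Tr(b y(alpha^z)^q) = 0 for every b, so y(alpha^z) = 0;
   an intersection point instead yields a trace word of C^{perp_h} outside C.
   For the arithmetic, reduce t modulo 2m and, multiplying by q^(2m-t) (which swaps x and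
   y), assume t <= m; then below delta_max the sum y + x q^t is too small to be a
   multiple of n, while above delta_max explicit witnesses attain n. *)

From HB Require Import structures.
From mathcomp Require Import all_boot all_order all_algebra all_field.
From mathcomp Require Import boolp zify.
Import GRing.Theory.

Set Implicit Arguments. Unset Strict Implicit. Unset Printing Implicit Defensive.

(* [y = -q (x q^(t-1)) mod n] witnesses that Z meets -qZ: for odd t, x q^(t-1) mod n
   lies in the q^2-cyclotomic coset of x. *)
Definition herm_obstruction (q m d : nat) : Prop :=
  exists x y t, [/\ 0 < x < d, 0 < y < d, odd t & (q ^ (2 * m)).-1 %| y + x * q ^ t].

Lemma expn_modpred (q e : nat) : 0 < q -> q ^ e = 1 %[mod (q ^ e).-1].
Proof.
move=> q_gt0; have: 0 < q ^ e by rewrite expn_gt0 q_gt0.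
by case: (q ^ e) => // N _ /=; rewrite -addn1 modnDl.
Qed.

Lemma expn_modpred_mod (q e k : nat) : 0 < q -> q ^ k = q ^ (k %% e) %[mod (q ^ e).-1].
Proof.
move=> q_gt0; rewrite {1}(divn_eq k e) expnD (mulnC _ e) expnM.
by rewrite -modnMml -modnXm expn_modpred // modnXm exp1n modnMml mul1n.
Qed.

Lemma dvdn_predX_mod (q e k x y : nat) : 0 < q ->
  ((q ^ e).-1 %| y + x * q ^ k) = ((q ^ e).-1 %| y + x * q ^ (k %% e)).
Proof.
by move=> q_gt0; rewrite /dvdn -modnDmr -modnMmr expn_modpred_mod // modnMmr modnDmr.
Qed.

Lemma dvdn_predX_swap (q e t x y : nat) : 0 < q -> t <= e ->
  (q ^ e).-1 %| y + x * q ^ t -> (q ^ e).-1 %| x + y * q ^ (e - t).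
Proof.
move=> q_gt0 le_te /(dvdn_mulr (q ^ (e - t))).
rewrite mulnDl -mulnA -expnD subnKC // /dvdn -modnDmr -modnMmr expn_modpred //.
by rewrite modnMmr muln1 modnDmr addnC.
Qed.

Lemma lt_predX_delta_max (q m d x y t : nat) : 1 < q -> 0 < m ->
  d <= delta_max q m -> 0 < x < d -> 0 < y < d -> odd t -> t <= m ->
  y + x * q ^ t < (q ^ (2 * m)).-1.
Proof.
move=> q_gt1 m_gt0; rewrite /delta_max.
case: (boolP (odd m)) => m_odd /= le_d x_d y_d t_odd le_tm.
- rewrite addn0 muln0 subn0 in le_d.
  have le_qt : q ^ t <= q ^ m by rewrite leq_pexp2l // ltnW.
  have q2m : q ^ (2 * m) = q ^ m * q ^ m by rewrite mul2n -addnn expnD.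
  have w_ge : q <= q ^ m by rewrite -{1}(expn1 q) leq_pexp2l // ltnW.
  rewrite q2m; set w := q ^ m in le_d le_qt w_ge *; set u := q ^ t in le_qt *.
  have : x * u <= (w - 2) * w by apply: leq_mul; lia.
  nia.
- rewrite addn1 muln1 in le_d.
  have le_tm1 : t <= m.-1 by case: (t =P m) t_odd m_odd => [-> ->|]; lia.
  have le_qt : q ^ t <= q ^ m.-1 by rewrite leq_pexp2l // ltnW.
  have qm1 : q ^ m.+1 = q * q * q ^ m.-1 by rewrite -mulnA -!expnS prednK.
  have q2m : q ^ (2 * m) = q * q * q ^ m.-1 * q ^ m.-1.
    by rewrite -qm1 -expnD; congr (_ ^ _); lia.
  have r_gt0 : 0 < q ^ m.-1 by rewrite expn_gt0 ltnW.
  rewrite q2m; rewrite qm1 expnS expn1 in le_d.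
  set r := q ^ m.-1 in le_d le_qt r_gt0 *; set u := q ^ t in le_qt *.
  have : x * u <= (q * q * r - q * q) * r by apply: leq_mul; lia.
  nia.
Qed.

Lemma no_herm_obstruction (q m d : nat) : 1 < q -> 0 < m ->
  d <= delta_max q m -> ~ herm_obstruction q m d.
Proof.
move=> q_gt1 m_gt0 le_d [x [y [t [x_d y_d t_odd]]]].
have q_gt0 : 0 < q by apply: ltnW.
rewrite dvdn_predX_mod //; set t' := t %% (2 * m).
have lt_t' : t' < 2 * m by rewrite ltn_pmod // muln_gt0.
have t'_odd : odd t' by rewrite /t' odd_mod // oddM.
have not_dvd x' y' s : 0 < x' < d -> 0 < y' < d -> odd s -> s <= m ->
    ~~ ((q ^ (2 * m)).-1 %| y' + x' * q ^ s).
  move=> x'_d y'_d s_odd le_sm; rewrite gtnNdvd ?(lt_predX_delta_max q_gt1 m_gt0 le_d) //.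
  by case/andP: y'_d => y'_gt0 _; rewrite addn_gt0 y'_gt0.
case: (leqP t' m) => [le_t'm|lt_mt'] dvd_t'.
  by have := not_dvd x y t' x_d y_d t'_odd le_t'm; rewrite dvd_t'.
have s_odd : odd (2 * m - t') by rewrite (oddB (ltnW lt_t')) oddM t'_odd.
have le_sm : 2 * m - t' <= m by lia.
have := not_dvd y x _ y_d x_d s_odd le_sm.
by rewrite (dvdn_predX_swap q_gt0 (ltnW lt_t') dvd_t').
Qed.

Lemma herm_obstruction_delta_max (q m d : nat) : 1 < q -> 0 < m -> m != 2 ->
  delta_max q m < d -> herm_obstruction q m d.
Proof.
move=> q_gt1 m_gt0 m_neq2; rewrite /delta_max.
case: (boolP (odd m)) => m_odd /= lt_d.
- rewrite addn0 muln0 subn0 in lt_d.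
  have w_ge : q <= q ^ m by rewrite -{1}(expn1 q) leq_pexp2l // ltnW.
  have q2m : q ^ (2 * m) = q ^ m * q ^ m by rewrite mul2n -addnn expnD.
  exists (q ^ m - 1), (q ^ m - 1), m; split => //; try (apply/andP; split; lia).
  rewrite q2m; set w := q ^ m in w_ge *.
  suff -> : w - 1 + (w - 1) * w = (w * w).-1 by [].
  nia.
- rewrite addn1 muln1 in lt_d.
  have m_ge4 : 4 <= m by case: m m_gt0 m_neq2 m_odd {lt_d} => [|[|[|[|]]]].
  have qm1 : q ^ m.+1 = q * q * q ^ m.-1 by rewrite -mulnA -!expnS prednK.
  have q2m : q ^ (2 * m) = q * q * q ^ m.-1 * q ^ m.-1.
    by rewrite -qm1 -expnD; congr (_ ^ _); lia.
  have r_ge : q * q <= q ^ m.-1.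
    by rewrite -[q in _ * q]expn1 -expnS leq_pexp2l //; lia.
  have m1_odd : odd m.-1 by move: m_odd; rewrite -{1}(prednK m_gt0) /= negbK.
  rewrite qm1 expnS expn1 in lt_d.
  set r := q ^ m.-1 in lt_d r_ge q2m *.
  have qq_ge4 : 4 <= q * q by apply: (leq_mul q_gt1 q_gt1).
  have qqr_ge : 4 * r <= q * q * r by rewrite leq_mul2r qq_ge4 orbT.
  exists (q * q * r - q * q + 1), (q * q * r - r - 1), m.-1.
  split => //; try (apply/andP; split; lia).
  rewrite q2m.
  suff -> : q * q * r - r - 1 + (q * q * r - q * q + 1) * r = (q * q * r * r).-1 by [].
  nia.
Qed.

Lemma in_bch_defset_lt (N Q d z : nat) : 0 < N -> in_bch_defset N Q d z -> z < N.
Proof. by move=> N_gt0 [x _ [k ->]]; rewrite ltn_mod. Qed.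

Lemma in_bch_defset_small (N Q d y : nat) : 0 < y < d -> y < N -> in_bch_defset N Q d y.
Proof.
by move=> /andP[y_gt0 y_d] y_N; exists y; [lia | exists 0; rewrite muln1 modn_small].
Qed.

Lemma in_bch_defset_conj (N q d x y t j : nat) : 0 < x < d -> y <= N -> odd t ->
  N %| y + x * q ^ t -> in_bch_defset N (q ^ 2) d ((N - y) * q * (q ^ 2) ^ j %% N).
Proof.
move=> x_d le_yN t_odd /dvdnP[c dvd_c]; exists x; first lia.
exists (t./2 + 1 + j); apply/eqP; rewrite -(eqn_modDr (y * q * (q ^ 2) ^ j)).
rewrite -!mulnA -mulnDl subnK // modnMr.
have -> : (q ^ 2) ^ (t./2 + 1 + j) = q ^ t * (q * (q ^ 2) ^ j).
  rewrite -!expnM -expnS -expnD; congr (_ ^ _).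
  by rewrite -{2}(odd_double_half t) t_odd; lia.
by rewrite mulnA -mulnDl addnC dvd_c mulnAC modnMl.
Qed.

Lemma herm_obstruction_defset (q m d z w j : nat) : 0 < q -> 0 < m ->
  in_bch_defset (q ^ (2 * m)).-1 (q ^ 2) d z ->
  in_bch_defset (q ^ (2 * m)).-1 (q ^ 2) d w ->
  (q ^ (2 * m)).-1 %| q * z * (q ^ 2) ^ j + w -> herm_obstruction q m d.
Proof.
move=> q_gt0 m_gt0 [x x_d [a ->]] [y y_d [b ->]].
set N := (q ^ (2 * m)).-1.
rewrite /dvdn modnDmr -modnDml mulnAC modnMmr modnDml.
move/(dvdn_mulr ((q ^ 2) ^ (b * m.-1))).
set s := (2 * (a + j + b * m.-1)).+1.
have -> : (q * (q ^ 2) ^ j * (x * (q ^ 2) ^ a) + y * (q ^ 2) ^ b) * (q ^ 2) ^ (b * m.-1)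
    = x * q ^ s + y * q ^ (b * (2 * m)).
  rewrite -!expnM mulnDl; congr (_ + _); first by rewrite /s expnS !mulnDr !expnD; lia.
  rewrite -mulnA -expnD; congr (_ * _ ^ _).
  by rewrite -[in RHS](prednK m_gt0); nia.
rewrite dvdn_predX_mod // modnMl muln1 addnC => dvd_s.
exists x, y, s; split=> //.
- by apply/andP; split; lia.
- by apply/andP; split; lia.
- by rewrite /s /= oddM.
Qed.

Local Open Scope ring_scope.

Lemma sum_prim_root_expr (R : idomainType) (n j : nat) (z : R) : n.-primitive_root z ->
  \sum_(i < n) (z ^+ j) ^+ i = if (n %| j)%N then n%:R else 0.
Proof.
move=> prim_z; case: ifP => [dvd_nj | ndvd_nj].
  have -> : z ^+ j = 1 by rewrite -(expr_mod _ (prim_expr_order prim_z)) (eqP dvd_nj).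
  by rewrite (eq_bigr (fun=> 1)) => [|i _]; rewrite ?expr1n // sumr_const card_ord.
have zj_neq1 : z ^+ j - 1 != 0.
  by rewrite subr_eq0 -(expr0 z) (eq_prim_root_expr prim_z) mod0n; apply/negbT.
have := subrX1 (z ^+ j) n.
rewrite -exprM mulnC exprM (prim_expr_order prim_z) expr1n subrr => /esym/eqP.
by rewrite mulf_eq0 (negbTE zj_neq1) => /eqP.
Qed.

Lemma expr_sum_pchar (R : comNzRingType) (N : nat) (I : Type) (r : seq I) (P : pred I)
    (F : I -> R) : [pchar R].-nat N ->
  (\sum_(i <- r | P i) F i) ^+ N = \sum_(i <- r | P i) F i ^+ N.
Proof.
move=> charN; apply: (big_morph (fun x => x ^+ N)) => [x y|]; first exact: exprDn_pchar.
by case/andP: charN => N_gt0 _; rewrite expr0n eqn0Ngt N_gt0.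
Qed.

Lemma expf_card_expn (F : finFieldType) (x : F) (j : nat) : x ^+ (#|F| ^ j) = x.
Proof. by elim: j => [|j IHj]; rewrite ?expr1 // expnSr exprM IHj expf_card. Qed.

Lemma finField_fixed_image (K : finFieldType) (L : fieldType) (iota : {rmorphism K -> L})
    (x : L) : x ^+ #|K| = x -> exists a, iota a = x.
Proof.
move=> fix_x; have := congr1 (map_poly iota) (finField_genPoly K).
rewrite rmorphB /= map_polyXn map_polyX rmorph_prod /=.
under eq_bigr do rewrite map_polyXsubC.
rewrite -(big_map iota xpredT (fun y => 'X - y%:P)) => gen_eq.
have : root (\prod_(y <- map iota (index_enum K)) ('X - y%:P)) x.
  by rewrite -gen_eq /root !hornerE fix_x subrr.
by rewrite root_prod_XsubC => /mapP[a _ ->]; exists a.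
Qed.

Lemma sum_frobenius_neq0 (F : finFieldType) (Q m : nat) (P : pred nat) :
    (1 < Q)%N -> (0 < m)%N -> #|F| = (Q ^ m)%N -> P 0%N ->
  exists b : F, \sum_(j < m | P j) b ^+ (Q ^ j) != 0.
Proof.
move=> Q_gt1 m_gt0 cardF P0; pose pol : {poly F} := \sum_(j < m | P j) 'X^(Q ^ j).
have pol_eval b : pol.[b] = \sum_(j < m | P j) b ^+ (Q ^ j).
  by rewrite horner_sum; apply: eq_bigr => j _; rewrite hornerXn.
case: (pickP (fun b => pol.[b] != 0)) => [b pol_b | pol_roots].
  by exists b; rewrite -pol_eval.
have coef1 : pol`_1 = 1.
  rewrite coef_sum (bigD1 (Ordinal m_gt0)) //= coefXn expn0 eqxx big1 ?addr0 // => j.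
  case/andP=> _; rewrite -val_eqE coefXn -[1%N](expn0 Q) eqn_exp2l //= eq_sym.
  by move/negbTE ->.
have pol_neq0 : pol != 0.
  by apply: contra_eq_neq coef1 => ->; rewrite coef0 eq_sym oner_neq0.
have size_pol : (size pol <= (Q ^ m.-1).+1)%N.
  apply/leq_sizeP => i lt_i; rewrite coef_sum big1 // => j _; rewrite coefXn.
  have le_j : (Q ^ j <= Q ^ m.-1)%N by rewrite leq_pexp2l ?(ltnW Q_gt1) // -ltnS prednK.
  by case: eqP => // eq_i; move: lt_i; rewrite eq_i; lia.
have all_roots : all (root pol) (enum F) by apply/allP => b _; apply/negbFE/pol_roots.
have := max_poly_roots pol_neq0 all_roots (enum_uniq F).
rewrite -cardE cardF -[m in (Q ^ m)%N](prednK m_gt0) expnS => /leq_trans/(_ size_pol).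
have : (0 < Q ^ m.-1)%N by rewrite expn_gt0 ltnW.
nia.
Qed.

Definition word_eval (K L : fieldType) (iota : {rmorphism K -> L}) (n : nat)
    (c : 'rV[K]_n) (x : L) : L :=
  \sum_(i < n) iota (c ord0 i) * x ^+ i.

Lemma bch_codeP (K L : fieldType) (iota : {rmorphism K -> L}) (n Q d : nat) (alpha : L)
    (c : 'rV[K]_n) : n.-primitive_root alpha ->
  bch_code iota n Q d alpha c <->
  (forall z, in_bch_defset n Q d z -> word_eval iota c (alpha ^+ z) = 0).
Proof.
move=> prim_alpha.
have word_evalE x : (\sum_(i < n) (iota (c ord0 i))%:P * 'X^i).[x] = word_eval iota c x.
  by rewrite horner_sum; apply: eq_bigr => i _; rewrite hornerCM hornerXn.
rewrite /bch_code /bch_genpoly; split=> [dvd_gen z z_Z | roots_Z].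
  have z_n := in_bch_defset_lt (prim_order_gt0 prim_alpha) z_Z.
  have : ('X - (alpha ^+ z)%:P) %| \prod_(z' < n | `[< in_bch_defset n Q d z' >])
      ('X - (alpha ^+ z')%:P).
    by rewrite (bigD1 (Ordinal z_n)) ?dvdp_mulIl //=; apply/asboolP.
  by move/dvdp_trans/(_ dvd_gen); rewrite dvdp_XsubCl -word_evalE => /rootP.
set zs := [seq z : 'I_n <- index_enum 'I_n | `[< in_bch_defset n Q d z >]].
have roots :
    all (root (\sum_(i < n) (iota (c ord0 i))%:P * 'X^i)) [seq alpha ^+ val z | z <- zs].
  apply/allP => x /mapP[z]; rewrite mem_filter => /andP[/asboolP z_Z _] ->.
  by apply/rootP; rewrite word_evalE roots_Z.
have uniq_zs : uniq_roots [seq alpha ^+ val z | z <- zs].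
  rewrite uniq_rootsE map_inj_in_uniq ?filter_uniq ?index_enum_uniq // => z1 z2 _ _ /eqP.
  by rewrite (eq_prim_root_expr prim_alpha) !modn_small ?ltn_ord // => /eqP/val_inj.
have [r ->] := uniq_roots_prod_XsubC roots uniq_zs.
by rewrite big_map big_filter dvdp_mull.
Qed.

Section HermitianDual.

Variables (q m : nat) (K L : finFieldType) (iota : {rmorphism K -> L}) (alpha : L).
Hypotheses (q_pchar : [pchar L].-nat q) (m_gt0 : (0 < m)%N).
Hypotheses (cardK : #|K| = (q ^ 2)%N) (cardL : #|L| = (q ^ (2 * m))%N).
Local Notation n := (q ^ (2 * m)).-1.
Local Notation Q := (q ^ 2)%N.
Hypothesis prim_alpha : n.-primitive_root alpha.

Lemma q_gt1 : (1 < q)%N.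
Proof. by have := card_finNzRing_gt1 K; rewrite cardK; case: (q) => [|[|]]. Qed.

Lemma Q_gt1 : (1 < Q)%N.
Proof. by rewrite (ltn_sqr 1) q_gt1. Qed.

Lemma cardL_Q : #|L| = (Q ^ m)%N.
Proof. by rewrite cardL expnM. Qed.

Lemma natr_n : n%:R = -1 :> L.
Proof.
have q0 : q%:R = 0 :> L.
  by apply/eqP; apply: contraTT q_gt1; rewrite natf_neq0_pchar => /(pnat_1 q_pchar) ->.
apply/eqP; rewrite -subr_eq0 opprK -(natrD _ n 1) addn1 prednK ?expn_gt0 ?(ltnW q_gt1) //.
by rewrite natrX q0 expr0n muln_eq0 (negbTE (lt0n_neq0 m_gt0)).
Qed.

Lemma pnat_pchar_expq j : [pchar L].-nat (q ^ j)%N.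
Proof. by rewrite pnatX q_pchar. Qed.

Lemma iota_exprQ (a : K) j : iota a ^+ (Q ^ j) = iota a.
Proof. by rewrite -rmorphXn -cardK expf_card_expn. Qed.

Definition trace (v : L) : L := \sum_(j < m) v ^+ (Q ^ j).

Lemma trace_exprQ (v : L) : trace v ^+ Q = trace v.
Proof.
rewrite /trace expr_sum_pchar ?pnat_pchar_expq //.
under eq_bigr do rewrite -exprM -expnSr.
case: m m_gt0 cardL => // m' _ cardL'.
rewrite big_ord_recr big_ord_recl /= addrC; congr (_ + _).
by rewrite expn0 expr1 -expnM -cardL' expf_card.
Qed.

(* 0 off the image of iota *)
Definition preim (x : L) : K := odflt 0 [pick a | iota a == x].

Lemma preimK (x : L) : x ^+ Q = x -> iota (preim x) = x.
Proof.
rewrite -cardK => /(finField_fixed_image iota)[a iota_a]; rewrite /preim.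
by case: pickP => [a' /eqP // | /(_ a)]; rewrite iota_a eqxx.
Qed.

Definition trace_word (b : L) (s : nat) : 'rV[K]_n :=
  \row_(i < n) preim (trace (b * alpha ^+ (s * i))).

Lemma trace_wordE b s i : iota (trace_word b s ord0 i) = trace (b * alpha ^+ (s * i)).
Proof. by rewrite mxE preimK ?trace_exprQ. Qed.

Lemma word_eval_trace_word b s w :
  word_eval iota (trace_word b s) (alpha ^+ w) =
  - \sum_(j < m | (n %| s * Q ^ j + w)%N) b ^+ (Q ^ j).
Proof.
rewrite /word_eval (eq_bigr (fun i : 'I_n =>
  \sum_(j < m) b ^+ (Q ^ j) * (alpha ^+ (s * Q ^ j + w)) ^+ i)).
  rewrite exchange_big /= -mulN1r -natr_n mulr_sumr [in RHS]big_mkcond /=.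
  apply: eq_bigr => j _; rewrite -mulr_sumr sum_prim_root_expr //.
  by case: ifP; rewrite ?mulr0 // mulrC.
move=> i _; rewrite trace_wordE /trace mulr_suml; apply: eq_bigr => j _.
rewrite exprMn -mulrA; congr (_ * _); rewrite -!exprM -exprD; congr (_ ^+ _).
by rewrite mulnDl mulnAC.
Qed.

Lemma herm_trace_word_l (y : 'rV[K]_n) b z :
  iota (\sum_(i < n) y ord0 i ^+ q * trace_word b (q * z) ord0 i) =
  trace (b * word_eval iota y (alpha ^+ z) ^+ q).
Proof.
rewrite rmorph_sum /= /trace.
under eq_bigr do rewrite rmorphM rmorphXn /= trace_wordE /trace mulr_sumr.
rewrite exchange_big /=; apply: eq_bigr => j _.
rewrite exprMn -exprM expr_sum_pchar; last by rewrite pnatM q_pchar -expnM pnat_pchar_expq.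
rewrite mulr_sumr; apply: eq_bigr => i _.
rewrite !exprMn mulrCA; congr (_ * (_ * _)).
  by rewrite (mulnC q) exprM iota_exprQ.
by rewrite -!exprM; congr (_ ^+ _); lia.
Qed.

Lemma herm_trace_word_r (c : 'rV[K]_n) b s :
  iota (\sum_(i < n) trace_word b s ord0 i ^+ q * c ord0 i) =
  \sum_(j < m) b ^+ (Q ^ j * q) * word_eval iota c (alpha ^+ (s * q * Q ^ j %% n)).
Proof.
rewrite rmorph_sum /=.
under eq_bigr do
  rewrite rmorphM rmorphXn /= trace_wordE /trace expr_sum_pchar ?q_pchar // mulr_suml.
rewrite exchange_big /=; apply: eq_bigr => j _.
rewrite /word_eval mulr_sumr; apply: eq_bigr => i _.
rewrite -exprM exprMn -mulrA [X in _ = _ * X]mulrC; congr (_ * (_ * _)).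
rewrite (expr_mod _ (prim_expr_order prim_alpha)) -!exprM; congr (_ ^+ _); lia.
Qed.

Lemma herm_dual_sub_bch d : ~ herm_obstruction q m d ->
  forall y : 'rV[K]_n, herm_dual n q (bch_code iota n Q d alpha) y ->
    bch_code iota n Q d alpha y.
Proof.
move=> no_obs y y_dual; apply/(bch_codeP iota Q d _ prim_alpha) => z z_Z.
set Y := word_eval iota y (alpha ^+ z).
have trace_bYq b : trace (b * Y ^+ q) = 0.
  rewrite -herm_trace_word_l y_dual ?rmorph0 //.
  apply/(bch_codeP iota Q d _ prim_alpha) => w w_Z.
  rewrite word_eval_trace_word big_pred0 ?oppr0 // => j; apply/negP => dvd_j.
  exact/no_obs/(herm_obstruction_defset (ltnW q_gt1) m_gt0 z_Z w_Z dvd_j).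
have [b trace_b] := sum_frobenius_neq0 Q_gt1 m_gt0 cardL_Q (isT : predT 0%N).
change (is_true (trace b != 0)) in trace_b; apply/eqP; apply: contraT => Y_neq0.
by move: trace_b; rewrite -[b](mulfVK (expf_neq0 q Y_neq0)) trace_bYq eqxx.
Qed.

Lemma herm_dual_not_sub_bch d : herm_obstruction q m d -> (d <= n)%N ->
  exists2 y : 'rV[K]_n, herm_dual n q (bch_code iota n Q d alpha) y &
    ~ bch_code iota n Q d alpha y.
Proof.
move=> [x [y0 [t [x_d y0_d t_odd dvd_t]]]] le_dn.
have y0_n : (y0 < n)%N by case/andP: y0_d => _ /leq_trans; apply.
set s := (n - y0)%N.
have dvd_s0 : (n %| s * Q ^ 0 + y0)%N by rewrite expn0 muln1 subnK // ltnW.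
have [b trace_b] := sum_frobenius_neq0 (P := fun j => n %| s * Q ^ j + y0)%N
  Q_gt1 m_gt0 cardL_Q dvd_s0.
exists (trace_word b s).
  move=> c c_C; apply: (fmorph_inj iota); rewrite rmorph0 herm_trace_word_r big1 // => j _.
  rewrite (iffLR (bch_codeP iota Q d _ prim_alpha) c_C) ?mulr0 //.
  exact: in_bch_defset_conj x_d (ltnW y0_n) t_odd dvd_t.
move/(bch_codeP iota Q d _ prim_alpha)/(_ y0 (in_bch_defset_small Q y0_d y0_n)).
by rewrite word_eval_trace_word => /eqP; rewrite oppr_eq0 (negbTE trace_b).
Qed.

End HermitianDual.

Unset Implicit Arguments.

Theorem mainTheorem3 (q m : nat) (K L : finFieldType)
    (iota : {rmorphism K -> L}) (alpha : L) (delta : nat) :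
  prime_power q -> (0 < m)%N -> m != 2%N ->
  #|K| = (q ^ 2)%N -> #|L| = (q ^ (2 * m))%N ->
  (q ^ (2 * m)).-1.-primitive_root alpha ->
  (2 <= delta <= (q ^ (2 * m)).-1)%N ->
  (forall y : 'rV[K]_((q ^ (2 * m)).-1),
      herm_dual _ q (bch_code iota (q ^ (2 * m)).-1 (q ^ 2) delta alpha) y ->
      bch_code iota (q ^ (2 * m)).-1 (q ^ 2) delta alpha y)
  <-> (delta <= delta_max q m)%N.
Proof.
move=> [p [k [p_prime _ q_def]]] m_gt0 m_neq2 cardK cardL prim_alpha /andP[_ le_dn].
have q_pchar : [pchar L].-nat q.
  have p_char : p \in [pchar L].
    by apply: (@card_finPcharP _ _ (k * (2 * m))) => //; rewrite cardL q_def -expnM.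
  by rewrite q_def pnatX (eq_pnat _ (pcharf_eq p_char)) pnat_id.
have q_gt1 := q_gt1 cardK.
split=> [dual_sub | le_delta].
  rewrite leqNgt; apply/negP => /(herm_obstruction_delta_max q_gt1 m_gt0 m_neq2) obs.
  have [y y_dual y_notC] :=
    herm_dual_not_sub_bch iota q_pchar m_gt0 cardK cardL prim_alpha obs le_dn.
  exact/y_notC/dual_sub.
move=> y; apply: (herm_dual_sub_bch q_pchar m_gt0 cardK cardL prim_alpha).
exact: no_herm_obstruction q_gt1 m_gt0 le_delta.
Qed.
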